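(* Let $n\ge1$ and let $\omega\in\mathbb{R}^n$ be non-resonant (i.e. $\langle k,\omega\rangle\notin\mathbb{Z}$ for all $k\in\mathbb{Z}^n\setminus\{0\}$). Suppose there exist $\tau\in\left[0,\frac{1}{n-1}\right)$ (with $\left[0,\frac{1}{n-1}\right)=[0,\infty)$ if $n=1$) and $C>0$ such that $T_{i+1}(\omega)\le C\,T_i(\omega)^{1+\tau}$ for all $i\ge0$. Then there is a constant $D>0$ such that for every $k\in\mathbb{Z}^n\setminus\{0\}$, $$\|\langle k,\omega\rangle\|_{\mathbb{Z}}\ge D\,|k|^{-(1+\mu)n},\qquad\text{where }\ \mu=\frac{n\tau}{n-(n-1)(1+\tau)}.$$
   Context: For $k\in\mathbb{Z}^n$, $|k|=\max_i|k_i|$; for $x\in\mathbb{R}$, $\|x\|_{\mathbb{Z}}=\min_{m\in\mathbb{Z}}|x-m|$; for $v\in\mathbb{R}^n$, $\|v\|_{\mathbb{Z}}=\min_{m\in\mathbb{Z}^n}|v-m|$. The periods of $\omega$ are $T_0(\omega)=1$ and $T_{i+1}(\omega)=\min\{T\in\mathbb{N},\,T\ge1:\|T\omega\|_{\mathbb{Z}}<\|T_i(\omega)\omega\|_{\mathbb{Z}}\}$ (all defined since $\omega$ is non-resonant). *)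

From HB Require Import structures.
From mathcomp Require Import all_boot all_order all_algebra.
From mathcomp Require Import all_classical all_reals all_analysis.
Set Implicit Arguments. Unset Strict Implicit. Unset Printing Implicit Defensive.
Import Order.TTheory GRing.Theory Num.Theory.
Local Open Scope classical_set_scope.
Local Open Scope ring_scope.

Section Defs.
Variable R : realType.

Definition distZ (x : R) : R := inf [set `|x - m%:~R| | m in [set: int]].

Definition supnormR n (v : 'I_n -> R) : R := \big[Num.max/0]_(i < n) `|v i|.

Definition distZv n (v : 'I_n -> R) : R :=
  inf [set supnormR (fun i => v i - (m i)%:~R) | m in [set: 'I_n -> int]].

Definition supnormZ n (k : 'I_n -> int) : nat := \big[maxn/0%N]_(i < n) `|k i|%N.

Definition dotZR n (k : 'I_n -> int) (w : 'I_n -> R) : R :=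
  \sum_(i < n) (k i)%:~R * w i.

Definition nonzeroZ n (k : 'I_n -> int) : Prop := exists i, k i != 0.

Definition non_resonant n (w : 'I_n -> R) : Prop :=
  forall k : 'I_n -> int, nonzeroZ k -> ~ (exists m : int, dotZR k w = m%:~R).

Definition scaleT n (T : nat) (w : 'I_n -> R) : 'I_n -> R := fun i => T%:R * w i.

(* T_{i+1} = min { T >= 1 : ||T w||_Z < ||T_i w||_Z } (0 if no such T,
   which never happens for non-resonant w). *)
Definition next_period n (w : 'I_n -> R) (t : nat) : nat :=
  match pselect (exists T : nat,
     (0 < T)%N && `[< distZv (scaleT T w) < distZv (scaleT t w) >]) with
  | left h => ex_minn h
  | right _ => 0%N
  end.

Fixpoint period n (w : 'I_n -> R) (i : nat) : nat :=
  match i with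
  | 0 => 1%N
  | i'.+1 => next_period w (period w i')
  end.

End Defs.

(* Write eps T for the distance of T w to Z^n and d for |<k, w> - m|.
   Pigeonhole on the fractional parts of t w gives eps (T_j)^n T_(j+1) <= 2^n.
   Let T_j be the first period with n |k| eps (T_j) < T_j d; it exists since
   T_j > j and eps <= 1.  Writing T_j (<k, w> - m) as an integer plus
   <k, T_j w - p> with |<k, T_j w - p>| < T_j d forces the integer to be
   nonzero, so 2 T_j d >= 1, while T_(j-1) d <= n |k| eps (T_(j-1)).
   Eliminating T_(j-1), T_j and eps (T_(j-1)) between these, the pigeonhole
   bound and T_j <= C T_(j-1)^(1+tau) (a linear combination of logarithms)
   leaves d >~ |k|^(-e) with e = n (1+tau) / (n - (n-1)(1+tau)) = (1+mu) n. *)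

From HB Require Import structures.
From mathcomp Require Import all_boot all_order all_algebra.
From mathcomp Require Import all_classical all_reals all_analysis.
From mathcomp Require Import ring lra.
Import Order.TTheory GRing.Theory Num.Theory.
Set Implicit Arguments. Unset Strict Implicit. Unset Printing Implicit Defensive.
Local Open Scope classical_set_scope.
Local Open Scope ring_scope.

Section Norms.
Variable R : realType.

Lemma supnormR_ge n (v : 'I_n -> R) i : `|v i| <= supnormR v.
Proof. exact: (le_bigmax _ (fun i => `|v i|) i). Qed.

Lemma supnormR_ge0 n (v : 'I_n -> R) : 0 <= supnormR v.
Proof. by rewrite /supnormR; elim/big_ind: _ => //= x y x_ge0 _; rewrite le_max x_ge0. Qed.

Lemma supnormR_lt n (v : 'I_n -> R) b :
  0 < b -> (forall i, `|v i| < b) -> supnormR v < b.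
Proof. by move=> b_gt0 lt_b; apply: bigmax_lt. Qed.

Lemma normr_le_supnormZ n (k : 'I_n -> int) i : `|(k i)%:~R : R| <= (supnormZ k)%:R.
Proof.
rewrite -intr_norm -abszE ler_nat.
exact: (leq_bigmax (F := fun i => `|k i|%N) i).
Qed.

Lemma supnormZ_gt0 n (k : 'I_n -> int) : nonzeroZ k -> (0 < supnormZ k)%N.
Proof.
case=> i ki; rewrite /supnormZ.
by apply: leq_trans (leq_bigmax (F := fun i => `|k i|%N) i); rewrite absz_gt0.
Qed.

Lemma norm_dotZR_le n (k : 'I_n -> int) (v : 'I_n -> R) :
  `|dotZR k v| <= n%:R * (supnormZ k)%:R * supnormR v.
Proof.
apply: le_trans (ler_norm_sum _ _ _) _.
rewrite -mulrA mulr_natl -[n in _ *+ n]card_ord -sumr_const.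
apply: ler_sum => i _; rewrite normrM.
exact: ler_pM (normr_le_supnormZ k i) (supnormR_ge v i).
Qed.

Lemma dotZR_scaleT_sub n (k : 'I_n -> int) (w : 'I_n -> R) (T : nat) (m : int)
    (p : 'I_n -> int) :
  T%:R * (dotZR k w - m%:~R) =
  (\sum_(i < n) k i * p i - T%:Z * m)%:~R + dotZR k (fun i => scaleT T w i - (p i)%:~R).
Proof.
rewrite /dotZR /scaleT intrB intrM raddf_sum /= mulrBr mulr_sumr addrAC -big_split /=.
by congr (_ - _); apply: eq_bigr => i _; rewrite intrM; ring.
Qed.

Let distZv_set_lbound n (v : 'I_n -> R) :
  has_lbound [set supnormR (fun i => v i - (m i)%:~R) | m in [set: 'I_n -> int]].
Proof. by exists 0 => _ [m _ <-]; exact: supnormR_ge0. Qed.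

Let distZv_set_neq0 n (v : 'I_n -> R) :
  [set supnormR (fun i => v i - (m i)%:~R) | m in [set: 'I_n -> int]] !=set0.
Proof. by exists (supnormR (fun i => v i - (0 : int)%:~R)), (fun=> 0). Qed.

Lemma distZv_le n (v : 'I_n -> R) (m : 'I_n -> int) :
  distZv v <= supnormR (fun i => v i - (m i)%:~R).
Proof. by apply: (ge_inf (distZv_set_lbound v)); exists m. Qed.

Lemma distZv_ltP n (v : 'I_n -> R) b :
  distZv v < b -> exists m : 'I_n -> int, supnormR (fun i => v i - (m i)%:~R) < b.
Proof. by move=> /(inf_lt (distZv_set_neq0 v)) [_ [m _ <-]]; exists m. Qed.

Lemma distZv_le1 n (v : 'I_n -> R) : distZv v <= 1.
Proof.
apply: le_trans (distZv_le v (fun i => Num.floor (v i))) (ltW _).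
apply: supnormR_lt => // i; have /andP[fl_le lt_fl1] := floor_itv (v i).
by rewrite intrD in lt_fl1; rewrite ger0_norm ?subr_ge0 //; lra.
Qed.

Lemma distZv_gt0 n (v : 'I_n -> R) i0 : (forall m : int, v i0 != m%:~R) -> 0 < distZv v.
Proof.
move=> v_notint; set x := v i0; set f := Num.floor x.
have /andP[fl_le lt_fl1] := floor_itv x.
have fl_neq : f%:~R != x by rewrite eq_sym v_notint.
have gap_gt0 : 0 < Num.min (x - f%:~R) ((f + 1)%:~R - x).
  by rewrite lt_min !subr_gt0 lt_fl1 andbT lt_neqAle fl_le andbT.
apply: lt_le_trans gap_gt0 (lb_le_inf (distZv_set_neq0 v) _) => _ [m _ <-].
apply: le_trans (supnormR_ge _ i0); rewrite /= -/x ge_min.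
have [m_le|m_gt] := lerP (m i0) f.
- have : ((m i0)%:~R : R) <= f%:~R by rewrite ler_int.
  by move=> ?; rewrite ger0_norm; lra.
- have : ((f + 1)%:~R : R) <= (m i0)%:~R by rewrite ler_int lezD1.
  by move=> ?; rewrite ler0_norm; lra.
Qed.

Lemma dotZR_approx_ge n (k : 'I_n -> int) (w : 'I_n -> R) (T : nat) (m : int) :
  nonzeroZ k ->
  n%:R * (supnormZ k)%:R * distZv (scaleT T w) < T%:R * `|dotZR k w - m%:~R| ->
  1 <= 2 * (T%:R * `|dotZR k w - m%:~R|).
Proof.
move=> k_nz; set a := T%:R * _; set c : R := n%:R * _ => ca_lt.
have c_gt0 : 0 < c.
  have [i _] := k_nz; rewrite mulr_gt0 ?ltr0n ?supnormZ_gt0 //.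
  exact: leq_ltn_trans (leq0n i) (ltn_ord i).
have [p p_lt] : exists p : 'I_n -> int,
    c * supnormR (fun i => scaleT T w i - (p i)%:~R) < a.
  have [|p] := @distZv_ltP _ (scaleT T w) (a / c); first by rewrite ltr_pdivlMr // mulrC.
  by exists p; rewrite mulrC -ltr_pdivlMr.
have dot_le := norm_dotZR_le k (fun i => scaleT T w i - (p i)%:~R); rewrite -/c in dot_le.
have a_eq : `|T%:R * (dotZR k w - m%:~R)| = a by rewrite normrM normr_nat.
rewrite (dotZR_scaleT_sub k w T m p) in a_eq.
set z := (\sum_(i < n) _ - _)%R in a_eq; set d := dotZR k _ in dot_le a_eq.
have [z0|z_neq0] := eqVneq z 0; first by rewrite z0 add0r in a_eq; lra.
have z_ge1 : 1 <= `|(z%:~R : R)|.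
  by apply: norm_intr_ge1; rewrite ?intr_int // intr_eq0.
by have := lerB_normD (z%:~R : R) d; lra.
Qed.

End Norms.

Section Dirichlet.
Variable R : realType.

Definition frac (x : R) := x - (Num.floor x)%:~R.

Lemma frac_itv x : 0 <= frac x < 1.
Proof.
have /andP[fl_le lt_fl1] := floor_itv x.
by rewrite intrD in lt_fl1; apply/andP; rewrite /frac; split; lra.
Qed.

Lemma truncn_frac_lt Q x : (Num.truncn (Q.+1%:R * frac x) < Q.+1)%N.
Proof.
have /andP[_ fr_lt1] := frac_itv x.
by rewrite ltnS truncn_le_nat -[X in _ < X]mulr1 ltr_pM2l ?ltr0n.
Qed.

Lemma truncn_frac_eq Q x y : (0 < Q)%N ->
  Num.truncn (Q%:R * frac x) = Num.truncn (Q%:R * frac y) -> `|frac y - frac x| < Q%:R^-1.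
Proof.
move=> Q_gt0 trunc_eq.
have Q_gt0' : (0 : R) < Q%:R by rewrite ltr0n.
have /andP[x_ge0 _] := frac_itv x; have /andP[y_ge0 _] := frac_itv y.
have /andP[a_le_x x_lt_a1] := truncn_itv (mulr_ge0 (ltW Q_gt0') x_ge0).
have /andP[a_le_y y_lt_a1] := truncn_itv (mulr_ge0 (ltW Q_gt0') y_ge0).
rewrite trunc_eq -natr1 in a_le_x x_lt_a1; rewrite -natr1 in y_lt_a1.
have QQV : (Q%:R : R) * Q%:R^-1 = 1 by rewrite mulfV ?gt_eqF.
have QV_gt0 : (0 : R) < Q%:R^-1 by rewrite invr_gt0.
by rewrite ltr_norml; apply/andP; split; nra.
Qed.

(* Pigeonhole on the boxes of side 1/Q containing the fractional parts of the
   vectors t w, 0 <= t <= Q^n. *)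
Lemma dirichlet n (w : 'I_n -> R) Q : (0 < Q)%N ->
  exists T : nat, [/\ (0 < T)%N, (T <= Q ^ n)%N & distZv (scaleT T w) < Q%:R^-1].
Proof.
case: Q => // Q _.
pose box (t : 'I_(Q.+1 ^ n).+1) : {ffun 'I_n -> 'I_Q.+1} :=
  [ffun i => inord (Num.truncn (Q.+1%:R * frac (t%:R * w i)))].
have /injectivePn [t1 [t2 t12 box_eq]] : ~~ injectiveb box.
  by apply/negP => /injectiveP /leq_card; rewrite card_ffun !card_ord ltnn.
wlog t1_lt : t1 t2 t12 box_eq / (t1 < t2)%N.
  move=> gen; have [|t2_lt|/val_inj t1E] := ltngtP t1 t2; first exact: gen.
    by apply: (gen t2 t1) => //; rewrite eq_sym.
  by rewrite t1E eqxx in t12.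
exists (t2 - t1)%N; split.
- by rewrite subn_gt0.
- by rewrite (leq_trans (leq_subr _ _)) // -ltnS.
pose p i := Num.floor (t2%:R * w i) - Num.floor (t1%:R * w i).
apply: le_lt_trans (distZv_le _ p) (supnormR_lt _ _); first by rewrite invr_gt0 ltr0n.
move=> i; have box_eq_i : box t1 i = box t2 i by rewrite box_eq.
move: (congr1 val box_eq_i).
rewrite /box !ffunE /= !inordK ?truncn_frac_lt // => /truncn_frac_eq.
rewrite /scaleT /p /frac natrB ?(ltnW t1_lt) // intrB.
by move=> /(_ isT); congr (`|_| < _); ring.
Qed.

Lemma dirichlet_eps n (w : 'I_n -> R) e : 0 < e <= 1 ->
  exists T : nat, [/\ (0 < T)%N, T%:R <= (2 / e) ^+ n & distZv (scaleT T w) < e].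
Proof.
move=> /andP[e_gt0 e_le1]; set Q := (Num.truncn e^-1).+1.
have [T [T_gt0 T_le dist_lt]] := dirichlet w (ltn0Sn (Num.truncn e^-1)).
have Q_le : (Q%:R : R) <= 2 / e.
  have tr_le : (Num.truncn e^-1)%:R <= e^-1 by rewrite truncn_le invr_ge0 ltW.
  have inv_ge1 : 1 <= e^-1 by rewrite invf_ge1.
  by rewrite /Q -natr1; lra.
exists T; split => //.
- apply: le_trans (_ : (Q%:R ^+ n : R) <= _).
    by rewrite -natrX ler_nat.
  by rewrite lerXn2r ?nnegrE ?ler0n // ltW // divr_gt0.
- apply: lt_trans dist_lt _.
  by rewrite -[X in _ < X](invrK e) ltf_pV2 ?posrE ?invr_gt0 ?ltr0n ?truncnS_gt.
Qed.

End Dirichlet.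

(* The sum of the hypotheses weighted by (N u, u, N, N + u). *)
Lemma log_inequality_elimination (R : realFieldType) (N u La Lb Ld Le LK LC L2 LN : R) :
  0 < N -> 0 < u ->
  La + Ld <= LN + LK + Le -> N * Le + Lb <= N * L2 -> Lb <= LC + u * La ->
  0 <= L2 + Lb + Ld ->
  0 <= (N - (N - 1) * u) * Ld + N * u * LK + (N * u * (L2 + LN) + N * LC + (N + u) * L2).
Proof.
move=> N_gt0 u_gt0 near dir growth far.
have sum12 : N * La + N * Ld + Lb <= N * LN + N * LK + N * L2 by nra.
have : u * (N * La + N * Ld + Lb) <= u * (N * LN + N * LK + N * L2).
  by rewrite ler_pM2l.
have : N * Lb <= N * LC + N * (u * La) by nra.
have : (N + u) * (- L2 - Ld) <= (N + u) * Lb by rewrite ler_pM2l ?addr_gt0 //; lra.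
nra.
Qed.

Section Periods.
Variables (R : realType) (n : nat) (w : 'I_n -> R).
Hypotheses (n_gt0 : (0 < n)%N) (w_nonres : non_resonant w).

Local Notation eps T := (distZv (scaleT T w)).

Lemma eps_gt0 T : (0 < T)%N -> 0 < eps T.
Proof.
move=> T_gt0; pose i0 := Ordinal n_gt0.
apply: (@distZv_gt0 _ _ _ i0) => m; apply/negP => /eqP Tw_int.
apply: (w_nonres (k := fun i => if i == i0 then T%:Z else 0)).
  by exists i0; rewrite eqxx eqz_nat -lt0n.
exists m; rewrite /dotZR (bigD1 i0) //= big1 ?addr0 => [|i /negbTE ->].
  by rewrite -Tw_int.
by rewrite mul0r.
Qed.

Lemma next_periodP t : (0 < t)%N ->
  [/\ (0 < next_period w t)%N, eps (next_period w t) < eps t &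
      forall T, (0 < T)%N -> eps T < eps t -> (next_period w t <= T)%N].
Proof.
move=> t_gt0; rewrite /next_period; case: pselect => [ex|[]]; last first.
  have eps_itv : 0 < eps t <= 1 by rewrite eps_gt0 // distZv_le1.
  have [T [T_gt0 _ eps_lt]] := dirichlet_eps w eps_itv.
  by exists T; rewrite T_gt0; apply/asboolP.
case: ex_minnP => T /andP[T_gt0 /asboolP eps_lt] T_min; split=> // T' T'_gt0 eps_lt'.
by apply: T_min; rewrite T'_gt0; apply/asboolP.
Qed.

Lemma period_gt0 j : (0 < period w j)%N.
Proof. by elim: j => [|j IHj] //=; have [] := next_periodP IHj. Qed.

Lemma eps_period_lt j : eps (period w j.+1) < eps (period w j).
Proof. by have [] := next_periodP (period_gt0 j). Qed.

Lemma eps_ge_before_period j T : (0 < T)%N -> (T < period w j.+1)%N ->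
  eps (period w j) <= eps T.
Proof.
move=> T_gt0 T_lt; rewrite leNgt; apply/negP => eps_lt.
have [_ _ /(_ T T_gt0 eps_lt)] := next_periodP (period_gt0 j).
by rewrite leqNgt T_lt.
Qed.

Lemma eps_period_min j T : (0 < T)%N -> (T <= period w j)%N ->
  eps (period w j) <= eps T.
Proof.
move=> T_gt0; rewrite leq_eqVlt => /orP[/eqP -> //|]; case: j => [|j] T_lt.
  by rewrite ltnS leqNgt T_gt0 in T_lt.
exact: le_trans (ltW (eps_period_lt j)) (eps_ge_before_period T_gt0 T_lt).
Qed.

Lemma period_lt j : (period w j < period w j.+1)%N.
Proof.
rewrite ltnNge; apply/negP => /(eps_period_min (period_gt0 j.+1)).
by rewrite leNgt eps_period_lt.
Qed.

Lemma period_ge j : (j < period w j)%N.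
Proof. by elim: j => [|j IHj] //; exact: leq_ltn_trans IHj (period_lt j). Qed.

Lemma eps_period_pow j : eps (period w j) ^+ n * (period w j.+1)%:R <= 2 ^+ n.
Proof.
set e := eps _; have e_gt0 : 0 < e := eps_gt0 (period_gt0 j).
have e_itv : 0 < e <= 1 by rewrite e_gt0 distZv_le1.
have [T [T_gt0 T_le eps_lt]] := dirichlet_eps w e_itv.
have period_le : ((period w j.+1)%:R : R) <= T%:R.
  rewrite ler_nat leqNgt; apply/negP => /(eps_ge_before_period T_gt0).
  by rewrite leNgt eps_lt.
apply: le_trans (_ : e ^+ n * (2 / e) ^+ n <= _).
  by apply: ler_wpM2l; [rewrite exprn_ge0 ?ltW | exact: le_trans period_le T_le].
by rewrite -exprMn mulrCA mulfV ?gt_eqF ?mulr1.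
Qed.

Lemma dist_dotZR_gt0 (k : 'I_n -> int) (m : int) : nonzeroZ k -> 0 < `|dotZR k w - m%:~R|.
Proof.
move=> k_nz; rewrite normr_gt0 subr_eq0; apply/negP => /eqP dot_int.
by apply: (w_nonres k_nz); exists m.
Qed.

Lemma dist_dotZR_period_bounds (k : 'I_n -> int) (m : int) : nonzeroZ k ->
  let d := `|dotZR k w - m%:~R| in
  1 <= 2 * d \/
  exists j, (period w j)%:R * d <= n%:R * (supnormZ k)%:R * eps (period w j)
            /\ 1 <= 2 * ((period w j.+1)%:R * d).
Proof.
move=> k_nz d; have d_gt0 : 0 < d := dist_dotZR_gt0 m k_nz.
pose good j := n%:R * (supnormZ k)%:R * eps (period w j) < (period w j)%:R * d.
have good_ex : exists j, good j.
  exists (Num.truncn (n%:R * (supnormZ k)%:R / d)); rewrite /good; set j := Num.truncn _.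
  have nK_lt : n%:R * (supnormZ k)%:R < (period w j)%:R * d.
    rewrite -ltr_pdivrMr //; apply: lt_le_trans (truncnS_gt _) _.
    by rewrite ler_nat period_ge.
  apply: le_lt_trans nK_lt; rewrite -[X in _ <= X]mulr1.
  by apply: ler_wpM2l; [rewrite mulr_ge0 | exact: distZv_le1].
case: (ex_minnP good_ex) => -[|j] good_j j_min.
  by left; have := dotZR_approx_ge k_nz good_j; rewrite /= mul1r.
right; exists j; split; last exact: dotZR_approx_ge k_nz good_j.
by rewrite leNgt; apply/negP => /j_min; rewrite ltnn.
Qed.

Lemma ln_dist_period_bounds (C u : R) (k : 'I_n -> int) (m : int) j :
  0 < C -> 0 < u -> (period w j.+1)%:R <= C * (period w j)%:R `^ u -> nonzeroZ k ->
  (period w j)%:R * `|dotZR k w - m%:~R| <= n%:R * (supnormZ k)%:R * eps (period w j) ->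
  1 <= 2 * ((period w j.+1)%:R * `|dotZR k w - m%:~R|) ->
  0 <= (n%:R - (n%:R - 1) * u) * ln `|dotZR k w - m%:~R| + n%:R * u * ln (supnormZ k)%:R
       + (n%:R * u * (ln 2 + ln n%:R) + n%:R * ln C + (n%:R + u) * ln 2).
Proof.
move=> C_gt0 u_gt0 growth_j k_nz near far.
have d_gt0 := dist_dotZR_gt0 m k_nz; set d := `|_| in d_gt0 near far *.
set a := period w j in near growth_j; set b := period w j.+1 in far growth_j.
set e := eps a in near; set N : R := n%:R in near *; set K : R := _%:R in near *.
have N_gt0 : 0 < N by rewrite ltr0n.
have K_gt0 : 0 < K by rewrite ltr0n supnormZ_gt0.
have a_gt0 : (0 : R) < a%:R by rewrite ltr0n period_gt0.
have b_gt0 : (0 : R) < b%:R by rewrite ltr0n period_gt0.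
have e_gt0 : 0 < e by rewrite eps_gt0 ?period_gt0.
apply: (@log_inequality_elimination _ N u (ln a%:R) (ln b%:R) _ (ln e)) => //.
- by rewrite -!lnM ?posrE ?mulr_gt0 // ler_ln ?posrE ?mulr_gt0.
- have := eps_period_pow j; rewrite -ler_ln ?posrE ?mulr_gt0 ?exprn_gt0 //.
  by rewrite !lnM ?posrE ?exprn_gt0 // !lnXn // /N !mulr_natl.
- move: growth_j; rewrite -ler_ln ?posrE ?mulr_gt0 ?powR_gt0 //.
  by rewrite lnM ?posrE ?powR_gt0 // ln_powR.
- move: far; rewrite -ler_ln ?posrE ?mulr_gt0 //.
  by rewrite ln1 !lnM ?posrE ?mulr_gt0 // addrA.
Qed.

Lemma ln_dist_lower (C u : R) : 0 < C -> 1 <= u -> 0 < n%:R - (n%:R - 1) * u ->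
  (forall i, (period w i.+1)%:R <= C * (period w i)%:R `^ u) ->
  exists c : R, forall (k : 'I_n -> int) (m : int), nonzeroZ k ->
    - c - n%:R * u / (n%:R - (n%:R - 1) * u) * ln (supnormZ k)%:R
      <= ln `|dotZR k w - m%:~R|.
Proof.
move=> C_gt0 u_ge1 den_gt0 growth; have u_gt0 : 0 < u by lra.
set N : R := n%:R in den_gt0 *; set den := N - (N - 1) * u in den_gt0 *.
pose c0 := N * u * (ln 2 + ln N) + N * ln C + (N + u) * ln 2.
exists ((den * ln 2 + `|c0|) / den) => k m k_nz.
have d_gt0 := dist_dotZR_gt0 m k_nz; set d := `|_| in d_gt0 *.
have NulnK_ge0 : 0 <= N * u * ln (supnormZ k)%:R.
  apply: mulr_ge0; first by rewrite mulr_ge0 ?ler0n ?ltW.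
  by apply: ln_ge0; rewrite ler1n supnormZ_gt0.
have den_ln2_gt0 : 0 < den * ln 2 by rewrite mulr_gt0 // ln_gt0 // ltr1n.
have c0_le : c0 <= `|c0| := ler_norm c0.
suff lower : - (den * ln 2 + `|c0|) <= den * ln d + N * u * ln (supnormZ k)%:R.
  have -> : - ((den * ln 2 + `|c0|) / den) - N * u / den * ln (supnormZ k)%:R
      = (- (den * ln 2 + `|c0|) - N * u * ln (supnormZ k)%:R) / den.
    by field; rewrite gt_eqF.
  by rewrite ler_pdivrMr // mulrC; lra.
have := dist_dotZR_period_bounds m k_nz; rewrite /= -/d => -[d_ge_half | [j [near far]]].
  have ln_d_ge : - ln 2 <= ln d.
    by rewrite -lnV ?posrE // ler_ln ?posrE ?invr_gt0 //; lra.
  have : 0 <= den * (ln d + ln 2) by apply: mulr_ge0; lra.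
  by rewrite mulrDr; have := normr_ge0 c0; lra.
have := ln_dist_period_bounds C_gt0 u_gt0 (growth j) k_nz near far.
by rewrite -/N -/den -/c0 => combined; lra.
Qed.

End Periods.

Theorem proposition3p10 (R : realType) (n : nat) (w : 'I_n -> R)
  (tau C : R) :
  (1 <= n)%N ->
  non_resonant w ->
  0 <= tau ->
  ((1 < n)%N -> tau < 1 / (n.-1)%:R) ->
  0 < C ->
  (forall i : nat, (period w i.+1)%:R <= C * (period w i)%:R `^ (1 + tau)) ->
  let mu := (n%:R * tau) / (n%:R - (n.-1)%:R * (1 + tau)) in
  exists D : R, 0 < D /\
    forall k : 'I_n -> int, nonzeroZ k ->
      distZ (dotZR k w) >= D * (supnormZ k)%:R `^ (- ((1 + mu) * n%:R)).
Proof.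
move=> n_gt0 w_nonres tau_ge0 tau_lt C_gt0 growth mu.
have predn_eq : ((n.-1)%:R : R) = n%:R - 1 by rewrite -subn1 natrB.
have den_gt0 : 0 < n%:R - (n%:R - 1) * (1 + tau) :> R.
  have [n_gt1|n_le1] := ltnP 1 n; last first.
    have -> : n = 1%N by apply/eqP; rewrite eqn_leq n_le1.
    by rewrite subrr mul0r subr0.
  have := tau_lt n_gt1; rewrite predn_eq ltr_pdivlMr ?subr_gt0 ?ltr1n //; lra.
have u_ge1 : 1 <= 1 + tau by lra.
have [c c_le] := ln_dist_lower n_gt0 w_nonres C_gt0 u_ge1 den_gt0 growth.
have exponent_eq : (1 + mu) * n%:R =
    n%:R * (1 + tau) / (n%:R - (n%:R - 1) * (1 + tau)).
  by rewrite /mu predn_eq; field; rewrite gt_eqF.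
exists (expR (- c)); split=> [|k k_nz]; first exact: expR_gt0.
rewrite exponent_eq; apply: lb_le_inf; first by exists `|dotZR k w - 0%:~R|, 0.
move=> _ [m _ <-]; have d_gt0 := dist_dotZR_gt0 w_nonres m k_nz.
rewrite -ler_ln ?posrE ?mulr_gt0 ?expR_gt0 ?powR_gt0 ?ltr0n ?supnormZ_gt0 //.
by rewrite lnM ?posrE ?expR_gt0 ?powR_gt0 ?ltr0n ?supnormZ_gt0 // expRK ln_powR mulNr c_le.
Qed.
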